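(* Let $k=k(n)$ be integers with $1\le k=O(\log n)$ and let $h(n)=o(n/\log^2 n)$. For every $\eta>0$ there is $n_0$ such that for all $n\ge n_0$ and every $X\subseteq Q=\{0,1\}^n$ with $\mu(X)\ge\exp[-h(n)]$, if $x$ is chosen uniformly from $X$ then $$\Pr(T(x)\in X)<(1+\eta)\mu(X).$$
   Context: $Q=\{0,1\}^n$ with uniform probability measure $\mu$. For $x\in Q$, $T(x)$ is the random element of $Q$ obtained by choosing $K$ uniformly from the $k$-subsets of $[n]$, keeping $x_i$ for $i\in K$, and replacing each $x_i$ with $i\notin K$ by an independent uniform bit (independently of everything else, including the choice of $x$). *)

From mathcomp Require Import all_boot.

Definition cube (n : nat) : finType := {ffun 'I_n -> bool}.
Definition cube_set (n : nat) : Type := {set cube n}.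

Definition card_cube_set (n : nat) (X : cube_set n) : nat := #|X|.

Definition agree (n : nat) (K : {set 'I_n}) (x y : cube n) : bool :=
  [forall i in K, x i == y i].

(* Given x and K, T(x) is uniform on the 2^(n-k) points
   agreeing with x on K, so
   Pr(T(x) in X) = trans_count / (|X| * C(n,k) * 2^(n-k))  for x uniform in X. *)
Definition trans_count (n k : nat) (X : cube_set n) : nat :=
  \sum_(x in X) \sum_(K : {set 'I_n} | #|K| == k)
     #|[set y in X | @agree n K x y]|.

Definition nbinom (n k : nat) : nat := 'C(n, k).

From Stdlib Require Import Reals.
Local Open Scope R_scope.

Definition mu (n : nat) (X : cube_set n) : R :=
  INR (@card_cube_set n X) / (2 ^ n).

Definition prob_TX (n k : nat) (X : cube_set n) : R :=
  INR (@trans_count n k X) /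
  (INR (@card_cube_set n X) * INR (nbinom n k) * 2 ^ (n - k)%nat).

(* The proof compares T with the product noise operator T_rho that keeps
   each coordinate independently with probability rho = e/6.
   1. Real analysis: a two-point hypercontractive inequality for the concave
      power Psi_e(x) = x^(1/(1+e)) (a quadratic refinement of the power-mean
      inequality plus Cauchy-Schwarz).
   2. Combinatorics on the cube: the two-point inequality tensorises to
      <1_X, T_rho 1_X> <= (2^n Psi_e(mu))^2; expanding T_rho over the random set
      of kept coordinates, and using that the normalised agreement counts
      increase with the number of kept coordinates (a positive-semidefiniteness
      argument), the level-k term is bounded by the whole form up to a
      binomial tail:  Pr(T(x) in X) (1 - 2^k (1 - e/12)^n) <= Psi_e(mu)^2 / mu.
   3. Asymptotics: with e = 12 (1+M) k / n the tail is at most exp(-M), and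
      Psi_e(mu)^2 / mu <= mu exp(2 e h(n)) with e h(n) -> 0, which gives the
      claim. *)

From Stdlib Require Import Reals Lra Psatz.
From Coquelicot Require Coquelicot.
From mathcomp Require all_boot all_order all_algebra Rstruct ring lra zify.
Open Scope R_scope.

Module LogBound.
Import Coquelicot.Coquelicot.

(* By the mean value theorem applied to
   f(x) = ln(1+x) - (x + x^2/3)/(1+x), whose derivative x(1-x)/(3(1+x)^2) is
   nonnegative on [0,1]. *)
Lemma ln1p_lower (t : R) : 0 <= t <= 1 -> t + t ^ 2 / 3 <= (1 + t) * ln (1 + t).
Proof.
intros Ht.
set (f := fun x => ln (1 + x) - (x + x ^ 2 / 3) / (1 + x)).
set (df := fun x => x * (1 - x) / (3 * (1 + x) ^ 2)).
destruct (MVT_gen f 0 t df) as [c [Hc Hmvt]];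
  rewrite ?Rmin_left, ?Rmax_right in * by lra.
- intros x Hx; unfold f, df; auto_derive; [repeat split; lra | field; lra].
- intros x Hx; apply continuity_pt_filterlim.
  apply (ex_derive_continuous (K := R_AbsRing) (V := R_NormedModule)).
  unfold f; auto_derive; repeat split; lra.
- assert (Hf0 : f 0 = 0).
  { unfold f; replace (1 + 0) with 1 by ring; rewrite ln_1; field. }
  assert (Hdf : 0 <= df c).
  { unfold df; apply Rmult_le_pos; [nra | apply Rlt_le, Rinv_0_lt_compat; nra]. }
  assert (Hft : (t + t ^ 2 / 3) / (1 + t) <= ln (1 + t))
    by (unfold f in Hmvt, Hf0; nra).
  apply Rmult_le_compat_l with (r := 1 + t) in Hft; [|lra].
  replace ((1 + t) * ((t + t ^ 2 / 3) / (1 + t))) with (t + t ^ 2 / 3) in Hft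
    by (field; lra).
  exact Hft.
Qed.

End LogBound.

Lemma sub1_le_mul_ln (y : R) : 0 < y -> y - 1 <= y * ln y.
Proof.
intros Hy. pose proof (exp_ineq1_le (ln (/ y))) as H.
rewrite exp_ln in H by (apply Rinv_0_lt_compat; lra).
rewrite ln_Rinv in H by lra.
assert (H2 : y * (1 - ln y) <= y * / y) by (apply Rmult_le_compat_l; lra).
rewrite Rinv_r in H2 by lra. nra.
Qed.

Lemma ln_le_sub1 (y : R) : 0 < y -> ln y <= y - 1.
Proof. intros Hy. pose proof (exp_ineq1_le (ln y)). rewrite exp_ln in H by lra. lra. Qed.

Lemma ln_le_mono (x y : R) : 0 < x -> x <= y -> ln x <= ln y.
Proof.
intros Hx Hxy. destruct (Req_dec x y) as [->|Hn]; [lra|].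
left; apply ln_increasing; lra.
Qed.

Lemma exp_le_mono (x y : R) : x <= y -> exp x <= exp y.
Proof.
intros Hxy. destruct (Req_dec x y) as [->|Hn]; [lra|].
left; apply exp_increasing; lra.
Qed.

(* Real powers of nonnegative reals, with the convention 0 ^ a = 0. *)
Definition rpow (x a : R) : R := if Rlt_dec 0 x then exp (a * ln x) else 0.

Lemma rpow_pos (x a : R) : 0 < x -> rpow x a = exp (a * ln x).
Proof. intros H. unfold rpow. destruct (Rlt_dec 0 x); [reflexivity | lra]. Qed.

Lemma rpow_npos (x a : R) : x <= 0 -> rpow x a = 0.
Proof. intros H. unfold rpow. destruct (Rlt_dec 0 x); [lra | reflexivity]. Qed.

Lemma rpow_ge0 (x a : R) : 0 <= rpow x a.
Proof. unfold rpow. destruct (Rlt_dec 0 x); [apply Rlt_le, exp_pos | lra]. Qed.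

Lemma rpow_1 (x : R) : 0 <= x -> rpow x 1 = x.
Proof.
intros H. destruct (Req_dec x 0) as [->|Hn]; [apply rpow_npos; lra|].
rewrite rpow_pos by lra. rewrite Rmult_1_l. apply exp_ln. lra.
Qed.

Lemma rpow_rpow (x a b : R) : 0 <= x -> rpow (rpow x a) b = rpow x (a * b).
Proof.
intros H. destruct (Req_dec x 0) as [->|Hn].
{ rewrite (rpow_npos 0 a), !rpow_npos by lra. reflexivity. }
rewrite (rpow_pos x), rpow_pos, rpow_pos, ln_exp by (apply exp_pos || lra).
f_equal; ring.
Qed.

Lemma rpowM (x y a : R) : 0 <= x -> 0 <= y -> rpow (x * y) a = rpow x a * rpow y a.
Proof.
intros Hx Hy. destruct (Req_dec x 0) as [->|Hn].
{ rewrite Rmult_0_l, !(rpow_npos 0) by lra. ring. }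
destruct (Req_dec y 0) as [->|Hn'].
{ rewrite Rmult_0_r, !(rpow_npos 0) by lra. ring. }
rewrite !rpow_pos, ln_mult, <- exp_plus by nra. f_equal; ring.
Qed.

Lemma rpow_sq (x a : R) : rpow x a ^ 2 = rpow x (2 * a).
Proof.
unfold rpow. destruct (Rlt_dec 0 x); [|ring].
simpl. rewrite Rmult_1_r, <- exp_plus. f_equal. ring.
Qed.

Lemma rpow_ge_base (x a : R) : 1 <= x -> 1 <= a -> x <= rpow x a.
Proof.
intros Hx Ha. rewrite rpow_pos by lra.
assert (Hl : 0 <= ln x) by (rewrite <- ln_1; apply ln_le_mono; lra).
rewrite <- (exp_ln x) at 1 by lra.
apply exp_le_mono. nra.
Qed.

Lemma rpow_tangent_lb (e y : R) : 0 < y -> y * (1 + e * ln y) <= rpow y (1 + e).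
Proof.
intros Hy. rewrite rpow_pos by exact Hy.
replace ((1 + e) * ln y) with (ln y + e * ln y) by ring.
rewrite exp_plus, exp_ln by exact Hy.
apply Rmult_le_compat_l; [lra | apply exp_ineq1_le].
Qed.

Lemma two_point_power_sum (e t : R) : 0 < e -> 0 <= t <= 1 ->
  2 + e * t ^ 2 / 3 <= rpow (1 + t) (1 + e) + rpow (1 - t) (1 + e).
Proof.
intros He Ht.
assert (Hplus : 1 + t + e * (t + t ^ 2 / 3) <= rpow (1 + t) (1 + e)).
{ pose proof (rpow_tangent_lb e (1 + t) ltac:(lra)).
  pose proof (LogBound.ln1p_lower t Ht). nra. }
assert (Hminus : 1 - t - e * t <= rpow (1 - t) (1 + e)).
{ destruct (Req_dec t 1) as [->|Hn].
  - rewrite rpow_npos by lra. lra.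
  - pose proof (rpow_tangent_lb e (1 - t) ltac:(lra)).
    pose proof (sub1_le_mul_ln (1 - t) ltac:(lra)). nra. }
nra.
Qed.

Definition pmean (e u v : R) : R :=
  rpow ((rpow u (1 + e) + rpow v (1 + e)) / 2) (/ (1 + e)).

Lemma pmean_comm (e u v : R) : pmean e u v = pmean e v u.
Proof. unfold pmean. rewrite Rplus_comm. reflexivity. Qed.

Lemma pmean_scale (e s u v : R) : 0 < e -> 0 <= s -> 0 <= u -> 0 <= v ->
  pmean e (s * u) (s * v) = s * pmean e u v.
Proof.
intros He Hs Hu Hv. unfold pmean.
replace ((rpow (s * u) (1 + e) + rpow (s * v) (1 + e)) / 2)
  with (rpow s (1 + e) * ((rpow u (1 + e) + rpow v (1 + e)) / 2))
  by (rewrite !rpowM by lra; field).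
rewrite rpowM, rpow_rpow by (try apply Rmult_le_pos; try apply Rplus_le_le_0_compat;
  try apply rpow_ge0; lra).
replace ((1 + e) * / (1 + e)) with 1 by (field; lra).
rewrite rpow_1 by lra. reflexivity.
Qed.

Lemma pmean_sq_lb_unit (e t : R) : 0 < e <= 1 -> 0 <= t <= 1 ->
  1 + e * t ^ 2 / 6 <= pmean e (1 + t) (1 - t) ^ 2.
Proof.
intros He Ht. unfold pmean. rewrite rpow_sq.
set (A := (rpow (1 + t) (1 + e) + rpow (1 - t) (1 + e)) / 2).
assert (HA : 1 + e * t ^ 2 / 6 <= A)
  by (pose proof (two_point_power_sum e t ltac:(lra) Ht); unfold A; lra).
assert (He2 : 1 <= 2 * / (1 + e)).
{ apply Rmult_le_reg_r with (r := 1 + e); [lra|].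
  rewrite Rmult_assoc, Rinv_l by lra. lra. }
assert (0 <= e * t ^ 2 / 6) by (apply Rmult_le_pos; [apply Rmult_le_pos; nra | lra]).
pose proof (rpow_ge_base A (2 * / (1 + e)) ltac:(lra) He2). lra.
Qed.

Lemma pmean_sq_lb (e u v : R) : 0 < e <= 1 -> 0 <= u -> 0 <= v ->
  (u + v) ^ 2 + (e / 6) * (u - v) ^ 2 <= 4 * pmean e u v ^ 2.
Proof.
intros He.
assert (Hord : forall u v, 0 <= v <= u ->
  (u + v) ^ 2 + (e / 6) * (u - v) ^ 2 <= 4 * pmean e u v ^ 2).
{ clear u v. intros u v Huv.
  destruct (Req_dec u 0) as [Hu0|Hu0].
  { assert (v = 0) by lra. subst. nra. }
  set (s := (u + v) / 2). set (t := (u - v) / (u + v)).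
  assert (Ht : 0 <= t <= 1).
  { unfold t; split; [apply Rmult_le_pos; [lra | left; apply Rinv_0_lt_compat; lra]|].
    apply Rmult_le_reg_r with (r := u + v); [lra|].
    unfold Rdiv. rewrite Rmult_assoc, Rinv_l by lra. lra. }
  replace u with (s * (1 + t)) by (unfold s, t; field; lra).
  replace v with (s * (1 - t)) by (unfold s, t; field; lra).
  rewrite pmean_scale by (unfold s; lra).
  pose proof (pmean_sq_lb_unit e t He Ht).
  assert (0 <= s ^ 2) by nra. nra. }
intros Hu Hv. destruct (Rle_dec v u).
- apply Hord; lra.
- rewrite pmean_comm.
  replace ((u + v) ^ 2 + (e / 6) * (u - v) ^ 2)
    with ((v + u) ^ 2 + (e / 6) * (v - u) ^ 2) by ring.
  apply Hord; lra.
Qed.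

Lemma weighted_cauchy_schwarz (c U D V E M N : R) : 0 <= c -> 0 <= M -> 0 <= N ->
  U ^ 2 + c * D ^ 2 <= 4 * M ^ 2 -> V ^ 2 + c * E ^ 2 <= 4 * N ^ 2 ->
  U * V + c * D * E <= 4 * M * N.
Proof.
intros Hc HM HN HU HV.
assert (CS : (U * V + c * D * E) ^ 2 <= (U ^ 2 + c * D ^ 2) * (V ^ 2 + c * E ^ 2)).
{ assert (0 <= c * (U * E - D * V) ^ 2) by (apply Rmult_le_pos; [lra | apply pow2_ge_0]).
  replace ((U ^ 2 + c * D ^ 2) * (V ^ 2 + c * E ^ 2))
    with ((U * V + c * D * E) ^ 2 + c * (U * E - D * V) ^ 2) by ring. lra. }
assert (0 <= c * D ^ 2) by (apply Rmult_le_pos; [lra | apply pow2_ge_0]).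
assert (0 <= c * E ^ 2) by (apply Rmult_le_pos; [lra | apply pow2_ge_0]).
assert (Hsq : (U * V + c * D * E) ^ 2 <= (4 * M * N) ^ 2).
{ apply Rle_trans with (1 := CS).
  replace ((4 * M * N) ^ 2) with ((4 * M ^ 2) * (4 * N ^ 2)) by ring.
  apply Rmult_le_compat; nra. }
apply Rsqr_incr_0_var; [unfold Rsqr; nra | apply Rmult_le_pos; lra].
Qed.

Definition Psi (e x : R) : R := rpow x (/ (1 + e)).

Lemma Psi_0 (e : R) : Psi e 0 = 0.
Proof. apply rpow_npos. lra. Qed.

Lemma Psi_1 (e : R) : Psi e 1 = 1.
Proof. unfold Psi. rewrite rpow_pos, ln_1, Rmult_0_r by lra. apply exp_0. Qed.

Lemma pmean_Psi (e a b : R) : 0 < e -> 0 <= a -> 0 <= b ->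
  pmean e (Psi e a) (Psi e b) = Psi e ((a + b) / 2).
Proof.
intros He Ha Hb. unfold pmean, Psi.
rewrite !rpow_rpow by lra.
replace (/ (1 + e) * (1 + e)) with 1 by (field; lra).
rewrite !rpow_1 by lra. reflexivity.
Qed.

Lemma two_point_inequality (e a0 a1 b0 b1 : R) : 0 < e <= 1 ->
  0 <= a0 -> 0 <= a1 -> 0 <= b0 -> 0 <= b1 ->
  (1 + e / 6) * (Psi e a0 * Psi e b0 + Psi e a1 * Psi e b1)
  + (1 - e / 6) * (Psi e a0 * Psi e b1 + Psi e a1 * Psi e b0)
  <= 4 * Psi e ((a0 + a1) / 2) * Psi e ((b0 + b1) / 2).
Proof.
intros He H0 H1 H2 H3.
rewrite <- !pmean_Psi by lra.
replace ((1 + e / 6) * (Psi e a0 * Psi e b0 + Psi e a1 * Psi e b1)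
  + (1 - e / 6) * (Psi e a0 * Psi e b1 + Psi e a1 * Psi e b0))
  with ((Psi e a0 + Psi e a1) * (Psi e b0 + Psi e b1)
        + (e / 6) * (Psi e a0 - Psi e a1) * (Psi e b0 - Psi e b1)) by ring.
apply weighted_cauchy_schwarz; try apply pmean_sq_lb; try apply rpow_ge0; lra.
Qed.

Module Combinatorics.
Import all_boot all_order all_algebra Rstruct ring lra zify.
Import Order.TTheory GRing.Theory Num.Theory.
Local Open Scope ring_scope.
#[local] Bind Scope ring_scope with R.

Definition ccons {n} (b : bool) (z : cube n) : cube n.+1 :=
  [ffun i => if unlift ord0 i is Some j then z j else b].

Lemma ccons0 n b (z : cube n) : ccons b z ord0 = b.
Proof. by rewrite /ccons ffunE unlift_none. Qed.

Lemma cconsS n b (z : cube n) j : ccons b z (lift ord0 j) = z j.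
Proof. by rewrite /ccons ffunE liftK. Qed.

Lemma big_cube_S (T : Type) (idx : T) (op : Monoid.com_law idx) n
    (F : cube n.+1 -> T) :
  \big[op/idx]_(x : cube n.+1) F x
  = \big[op/idx]_(b : bool) \big[op/idx]_(z : cube n) F (ccons b z).
Proof.
rewrite pair_big /= (reindex (fun p : bool * cube n => ccons p.1 p.2)) //=.
exists (fun x : cube n.+1 => (x ord0, [ffun j => x (lift ord0 j)])) => [[b z] _|x _] /=.
  by rewrite ccons0; congr pair; apply/ffunP => j; rewrite ffunE cconsS.
apply/ffunP => i; rewrite /ccons ffunE.
by case: (unliftP ord0 i) => [j ->|->]; rewrite ?ffunE.
Qed.

Definition slice {n} (A : {set cube n.+1}) b : {set cube n} := [set z | ccons b z \in A].

Lemma card_slice n (A : {set cube n.+1}) :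
  (#|A|%:R : R) = #|slice A true|%:R + #|slice A false|%:R.
Proof.
rewrite -!sum1_card !natr_sum big_mkcond /= big_cube_S big_bool /=.
by congr (_ + _); rewrite [in RHS]big_mkcond /=; apply: eq_bigr => z _; rewrite inE.
Qed.

Section NoiseForm.
Variable rho : R.

(* Transition weights of rho-correlated bits, up to the factor 1/2:
   equal bits get 1 + rho, different bits 1 - rho. *)
Definition noise_kernel (b c : bool) : R := if b == c then 1 + rho else 1 - rho.

(* The bilinear noise form <1_A, T_rho 1_B>, scaled by 2^n. *)
Definition noise_form {n} (A B : {set cube n}) : R :=
  \sum_(x in A) \sum_(y in B) \prod_(i < n) noise_kernel (x i) (y i).

Lemma noise_form_row n b (z : cube n) (B : {set cube n.+1}) :
  \sum_(y in B) \prod_(i < n.+1) noise_kernel (ccons b z i) (y i) =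
  \sum_(c : bool) noise_kernel b c
     * \sum_(w in slice B c) \prod_(i < n) noise_kernel (z i) (w i).
Proof.
rewrite big_mkcond big_cube_S /=; apply: eq_bigr => c _.
rewrite mulr_sumr [in RHS]big_mkcond /=; apply: eq_bigr => w _.
rewrite inE; case: (ccons c w \in B) => //.
rewrite big_ord_recl !ccons0; congr (_ * _).
by apply: eq_bigr => i _; rewrite !cconsS.
Qed.

Lemma noise_form_S n (A B : {set cube n.+1}) :
  noise_form A B = \sum_(b : bool) \sum_(c : bool)
     noise_kernel b c * noise_form (slice A b) (slice B c).
Proof.
rewrite /noise_form big_mkcond big_cube_S /=; apply: eq_bigr => b _.
transitivity (\sum_(z : cube n) \sum_(c : bool) (if ccons b z \in A then
   noise_kernel b c * \sum_(w in slice B c) \prod_(i < n) noise_kernel (z i) (w i)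
   else 0)).
  apply: eq_bigr => z _; case: ifP => _; first exact: noise_form_row.
  by rewrite big1.
rewrite exchange_big /=; apply: eq_bigr => c _.
rewrite mulr_sumr [in RHS]big_mkcond /=; apply: eq_bigr => z _.
by rewrite inE; case: ifP.
Qed.

End NoiseForm.

Section Hypercontractivity.
Variable rho : R.
Hypothesis rho01 : 0 <= rho <= 1.
Variable F : R -> R.
Hypothesis F0 : F 0 = 0.
Hypothesis F1 : F 1 = 1.
Hypothesis two_point : forall a0 a1 b0 b1 : R,
  0 <= a0 -> 0 <= a1 -> 0 <= b0 -> 0 <= b1 ->
  (1 + rho) * (F a0 * F b0 + F a1 * F b1) + (1 - rho) * (F a0 * F b1 + F a1 * F b0)
  <= 4 * F ((a0 + a1) / 2) * F ((b0 + b1) / 2).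

Definition Phi n (a : nat) : R := 2 ^+ n * F (a%:R / 2 ^+ n).

(* In dimension 0 every set is empty or the single point, where F 0 = 0 and
   F 1 = 1 make the bound exact. *)
Lemma noise_form_le_dim0 (A B : {set cube 0}) :
  noise_form rho A B <= Phi 0 #|A| * Phi 0 #|B|.
Proof.
have card01 (C : {set cube 0}) : (#|C| <= 1)%N.
  by apply: (leq_trans (max_card _)); rewrite /cube card_ffun card_ord.
rewrite /noise_form /Phi expr0 !divr1 !mul1r.
under eq_bigr do under eq_bigr do rewrite big_ord0.
rewrite !sumr_const; move: (card01 A) (card01 B).
by case: #|A| => [|[|//]] _; case: #|B| => [|[|//]] _ /=;
  rewrite ?F0 ?F1 ?mulr0 ?mul0r ?mulr1 ?mul0rn ?mulr1n.
Qed.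

(* Induction on n: slice A and B along the first coordinate, bound the four
   slice forms by induction and recombine them with the two-point inequality
   applied to the slice densities. *)
Lemma noise_form_le n (A B : {set cube n}) :
  noise_form rho A B <= Phi n #|A| * Phi n #|B|.
Proof.
elim: n A B => [|n IH] A B; first exact: noise_form_le_dim0.
rewrite noise_form_S !big_bool /= /noise_kernel /=.
set K : R := 2 ^+ n.
have K_gt0 : 0 < K by rewrite /K exprn_gt0.
have halve (x y : R) : (x + y) / 2 ^+ n.+1 = (x / K + y / K) / 2.
  by rewrite exprS /K; field; rewrite ?lt0r_neq0 ?exprn_gt0 // ltr0n.
rewrite /Phi !card_slice !halve exprS -/K.
have dens_ge0 (a : nat) : 0 <= a%:R / K by rewrite divr_ge0 // ltW.
have T := two_point _ _ _ _ (dens_ge0 #|slice A true|) (dens_ge0 #|slice A false|)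
                    (dens_ge0 #|slice B true|) (dens_ge0 #|slice B false|).
have H11 := IH (slice A true) (slice B true).
have H10 := IH (slice A true) (slice B false).
have H01 := IH (slice A false) (slice B true).
have H00 := IH (slice A false) (slice B false).
rewrite /Phi -/K in H11 H10 H01 H00.
case/andP: rho01 => r0 r1.
have KK_ge0 : 0 <= K * K by rewrite mulr_ge0 // ltW.
have := ler_wpM2l KK_ge0 T.
have q1 : 0 <= 1 + rho by lra.
have q2 : 0 <= 1 - rho by lra.
have := ler_wpM2l q1 H11; have := ler_wpM2l q1 H00.
have := ler_wpM2l q2 H10; have := ler_wpM2l q2 H01.
lra.
Qed.

End Hypercontractivity.

Lemma card_notin n (J : {set 'I_n}) : #|[pred i | i \notin J]| = (n - #|J|)%N.
Proof.
have -> : #|[pred i | i \notin J]| = #|~: J| by apply: eq_card => i; rewrite !inE.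
by have := cardsC J; rewrite card_ord; lia.
Qed.

Lemma exchange_big_cond (I J : finType) (P : I -> bool) (Q : I -> J -> bool)
    (G : I -> J -> R) :
  \sum_(K | P K) \sum_(i | Q K i) G K i = \sum_i \sum_(K | P K && Q K i) G K i.
Proof.
transitivity (\sum_K \sum_i (if P K && Q K i then G K i else 0)).
  rewrite big_mkcond; apply: eq_bigr => K _.
  by case: (P K) => /=; [rewrite big_mkcond | rewrite big1].
by rewrite exchange_big; apply: eq_bigr => i _; rewrite [RHS]big_mkcond.
Qed.

Lemma reindex_addU1 (T : finType) (i : T) (j : nat) (G : {set T} -> R) :
  \sum_(K : {set T} | (#|K| == j) && (i \notin K)) G (i |: K)
  = \sum_(K : {set T} | (#|K| == j.+1) && (i \in K)) G K.
Proof.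
rewrite [RHS](reindex_onto (fun K => i |: K) (fun K => K :\ i)); last first.
  by move=> K /andP[_ iK]; rewrite setD1K.
apply: eq_bigl => K; rewrite setU11 andbT.
case iK: (i \in K) => /=.
  rewrite andbF; symmetry; apply: negbTE; apply/negP => /andP[_ /eqP h].
  by move: iK; rewrite -h !inE eqxx.
by rewrite andbT setU1K ?iK // eqxx andbT cardsU1 iK.
Qed.

Section AgreementCounts.
Variable n : nat.
Variable X : {set cube n}.
Local Notation agrees := (@agree n).

Definition agree_pairs (K : {set 'I_n}) : R :=
  \sum_(x in X) \sum_(y in X) (agrees K x y)%:R.

Definition scaled_pairs (K : {set 'I_n}) : R := 2 ^+ #|K| * agree_pairs K.

Definition level_sum (j : nat) : R := \sum_(K : {set 'I_n} | #|K| == j) scaled_pairs K.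

Lemma agree_pairs_ge0 K : 0 <= agree_pairs K.
Proof. by apply: sumr_ge0 => x _; apply: sumr_ge0 => y _; rewrite ler0n. Qed.

Lemma scaled_pairs_ge0 K : 0 <= scaled_pairs K.
Proof. by rewrite /scaled_pairs mulr_ge0 ?exprn_ge0 ?agree_pairs_ge0. Qed.

Lemma level_sum_ge0 j : 0 <= level_sum j.
Proof. by apply: sumr_ge0 => K _; apply: scaled_pairs_ge0. Qed.

Definition restrict (K : {set 'I_n}) (x : cube n) : cube n :=
  [ffun j => if j \in K then x j else false].

Lemma agree_restrict K x y : agrees K x y = (restrict K x == restrict K y).
Proof.
apply/idP/eqP => [/forall_inP h | h].
  by apply/ffunP => j; rewrite !ffunE; case: ifP => // /h /eqP.
apply/forall_inP => i iK; move/ffunP: h => /(_ i).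
by rewrite !ffunE iK => ->.
Qed.

(* Agreement on K is an equivalence relation, so its kernel is positive
   semidefinite: it is a sum of squares over the classes. *)
Lemma agree_form_psd K (f : cube n -> R) :
  0 <= \sum_x \sum_y (agrees K x y)%:R * f x * f y.
Proof.
under eq_bigr do under eq_bigr do rewrite agree_restrict.
rewrite (partition_big (restrict K) predT) //=; apply: sumr_ge0 => c _.
have -> : \sum_(x | restrict K x == c) \sum_y
            ((restrict K x == restrict K y)%:R * f x * f y)
          = (\sum_(x | restrict K x == c) f x) * (\sum_(y | restrict K y == c) f y).
  rewrite mulr_suml; apply: eq_bigr => x /eqP hx.
  rewrite mulr_sumr [in RHS]big_mkcond /=; apply: eq_bigr => y _.
  by rewrite hx eq_sym; case: (restrict K y == c); rewrite ?mul1r ?mul0r ?mulr0.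
by rewrite -expr2 sqr_ge0.
Qed.

Lemma agreeU1 i K x y : agrees (i |: K) x y = (x i == y i) && agrees K x y.
Proof.
apply/forall_inP/andP => [h | [h1 /forall_inP h2] j].
  split; first by apply/h; rewrite setU11.
  by apply/forall_inP => j jK; apply: h; rewrite setU1r.
by case/setU1P => [-> //|]; apply: h2.
Qed.

(* Adding a coordinate i to K at most halves the agreement count: apply
   positive semidefiniteness to f = 1_X * (-1)^(x_i). *)
Lemma agree_pairs_halve (i : 'I_n) (K : {set 'I_n}) :
  agree_pairs K <= 2 * agree_pairs (i |: K).
Proof.
pose f x : R := (x \in X)%:R * (if x i then 1 else -1).
have := agree_form_psd K f.
have -> : \sum_x \sum_y (agrees K x y)%:R * f x * f y = \sum_x \sum_y
   (if x \in X then (if y \in X then 2 * (agrees (i |: K) x y)%:R - (agrees K x y)%:R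
                     else 0) else 0).
  apply: eq_bigr => x _; apply: eq_bigr => y _; rewrite /f agreeU1.
  by case: (x \in X); case: (y \in X); case: (x i); case: (y i);
     case: (agrees K x y) => /=; ring.
have -> : \sum_x \sum_y (if x \in X then (if y \in X then
     2 * (agrees (i |: K) x y)%:R - (agrees K x y)%:R else 0) else 0)
   = 2 * agree_pairs (i |: K) - agree_pairs K.
  rewrite /agree_pairs mulr_sumr -sumrB [in RHS]big_mkcond /=; apply: eq_bigr => x _.
  case: (x \in X); last by rewrite big1.
  by rewrite mulr_sumr -sumrB [in RHS]big_mkcond.
by rewrite subr_ge0.
Qed.

Lemma scaled_pairs_mono (i : 'I_n) (K : {set 'I_n}) :
  i \notin K -> scaled_pairs K <= scaled_pairs (i |: K).
Proof.
move=> iK; rewrite /scaled_pairs cardsU1 iK add1n exprS (mulrC 2) -mulrA.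
by apply: ler_wpM2l; [exact: exprn_ge0 | exact: agree_pairs_halve].
Qed.

(* Double counting of the pairs (K, K + i), |K| = j, using monotonicity. *)
Lemma level_sum_step j : (n - j)%:R * level_sum j <= (j.+1)%:R * level_sum j.+1.
Proof.
rewrite /level_sum mulr_sumr.
apply: (@le_trans _ _ (\sum_(K : {set 'I_n} | #|K| == j)
                        \sum_(i in ~: K) scaled_pairs (i |: K))).
  apply: ler_sum => K /eqP hK.
  have -> : (n - j)%:R * scaled_pairs K = \sum_(i in ~: K) scaled_pairs K.
    by rewrite sumr_const -hK -card_notin mulr_natl; congr (_ *+ _);
       apply: eq_card => i; rewrite !inE.
  by apply: ler_sum => i; rewrite inE => iK; apply: scaled_pairs_mono.
rewrite mulr_sumr exchange_big_cond.
have -> : \sum_(K : {set 'I_n} | #|K| == j.+1) (j.+1)%:R * scaled_pairs K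
        = \sum_(K : {set 'I_n} | #|K| == j.+1) \sum_(i in K) scaled_pairs K.
  by apply: eq_bigr => K /eqP hK; rewrite sumr_const hK mulr_natl.
rewrite [leRHS]exchange_big_cond; apply: ler_sum => i _.
by under eq_bigl do rewrite inE; rewrite reindex_addU1.
Qed.

Lemma level_avg_step j : (j < n)%N ->
  level_sum j / 'C(n, j)%:R <= level_sum j.+1 / 'C(n, j.+1)%:R.
Proof.
move=> hj.
have c0 : 0 < ('C(n, j)%:R : R) by rewrite ltr0n bin_gt0 ltnW.
have c1 : 0 < ('C(n, j.+1)%:R : R) by rewrite ltr0n bin_gt0.
have j1_gt0 : 0 < ((j.+1)%:R : R) by rewrite ltr0n.
have hb : ((j.+1)%:R * 'C(n, j.+1)%:R : R) = (n - j)%:R * 'C(n, j)%:R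
  by rewrite -!natrM mul_bin_left.
have hs := level_sum_step j.
have h0 := level_sum_ge0 j; have h1 := level_sum_ge0 j.+1.
rewrite ler_pdivrMr // mulrAC ler_pdivlMr //.
nra.
Qed.

Lemma level_avg_mono k j : (k <= j <= n)%N ->
  level_sum k / 'C(n, k)%:R <= level_sum j / 'C(n, j)%:R.
Proof.
elim: j => [|j IH] /andP[hkj hjn]; first by move: hkj; rewrite leqn0 => /eqP ->.
case: (ltngtP k j.+1) hkj => // [hk _ | -> //].
apply: (le_trans _ (level_avg_step _ hjn)).
by apply: IH; rewrite -ltnS hk ltnW.
Qed.

End AgreementCounts.
Arguments agree_pairs {n}.
Arguments scaled_pairs {n}.
Arguments level_sum {n}.
Arguments level_avg_mono {n}.

Lemma prod_sum_subsets n (a b : 'I_n -> R) :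
  \prod_i (a i + b i) = \sum_(J : {set 'I_n}) \prod_i (if i \in J then a i else b i).
Proof.
have -> : \prod_i (a i + b i) = \prod_i \sum_(c : bool) (if c then a i else b i).
  by apply: eq_bigr => i _; rewrite big_bool.
rewrite bigA_distr_bigA /= (reindex (fun J : {set 'I_n} => [ffun i => i \in J])) /=.
  by apply: eq_bigr => J _; apply: eq_bigr => i _; rewrite ffunE.
exists (fun f : {ffun 'I_n -> bool} => [set i | f i]) => [J _ | f _].
  by apply/setP => i; rewrite inE ffunE.
by apply/ffunP => i; rewrite !ffunE inE.
Qed.

Lemma sum_by_size n (G : {set 'I_n} -> R) :
  \sum_J G J = \sum_(j < n.+1) \sum_(J : {set 'I_n} | #|J| == j) G J.
Proof.
rewrite (partition_big (fun J : {set 'I_n} => inord #|J| : 'I_n.+1) predT) //=.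
apply: eq_bigr => j _; apply: eq_bigl => J.
rewrite -val_eqE /= inordK // ltnS.
by apply: leq_trans (max_card _) _; rewrite card_ord.
Qed.

Section BinomialTail.
Variables (n : nat) (rho : R).
Hypothesis rho01 : 0 <= rho <= 1.

Definition binom_term (j : nat) : R := (1 - rho) ^+ (n - j) * rho ^+ j *+ 'C(n, j).

Lemma binom_total : \sum_(j < n.+1) binom_term j = 1.
Proof. by rewrite /binom_term -exprDn subrK expr1n. Qed.

(* Chernoff-type bound: P(Bin(n, rho) < k) <= 2^k (1 - rho/2)^n, from
   comparing with the expansion of ((1 - rho) + rho/2)^n. *)
Lemma binom_upper_tail k :
  1 - 2 ^+ k * (1 - rho / 2) ^+ n <= \sum_(j < n.+1 | (k <= j)%N) binom_term j.
Proof.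
case/andP: rho01 => r0 r1.
have := binom_total; rewrite (bigID (fun j : 'I_n.+1 => (k <= j)%N)) /= => htot.
suff : \sum_(j < n.+1 | ~~ (k <= j)%N) binom_term j <= 2 ^+ k * (1 - rho / 2) ^+ n
  by lra.
have -> : 1 - rho / 2 = (1 - rho) + rho / 2 by field.
rewrite (exprDn (1 - rho) (rho / 2) n) mulr_sumr.
apply: (@le_trans _ _ (\sum_(j < n.+1 | ~~ (k <= j)%N)
          2 ^+ k * ((1 - rho) ^+ (n - j) * (rho / 2) ^+ j *+ 'C(n, j)))).
  apply: ler_sum => j hj.
  rewrite /binom_term -[_ *+ 'C(n, j)]mulr_natr
          -[(_ * (rho / 2) ^+ j) *+ 'C(n, j)]mulr_natr expr_div_n.
  have h2 : 0 < (2 : R) ^+ j by rewrite exprn_gt0.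
  have -> : 2 ^+ k * ((1 - rho) ^+ (n - j) * (rho ^+ j / 2 ^+ j) * 'C(n, j)%:R)
     = (2 ^+ k / 2 ^+ j) * ((1 - rho) ^+ (n - j) * rho ^+ j * 'C(n, j)%:R)
    by field; rewrite lt0r_neq0.
  rewrite -[leLHS]mul1r; apply: ler_wpM2r.
    by rewrite !mulr_ge0 ?exprn_ge0 ?subr_ge0 ?ler0n.
  rewrite ler_pdivlMr // mul1r ler_eXn2l //; last lra.
  by apply: ltnW; rewrite ltnNge.
rewrite [X in _ <= X](bigID (fun j : 'I_n.+1 => (k <= j)%N)) /= lerDr.
apply: sumr_ge0 => j _.
by rewrite mulr_ge0 ?exprn_ge0 // mulrn_wge0 // mulr_ge0 ?exprn_ge0 ?subr_ge0 ?divr_ge0.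
Qed.

End BinomialTail.

Section NoiseExpansion.
Variable n : nat.
Variable X : {set cube n}.
Variable rho : R.
Hypothesis rho01 : 0 <= rho <= 1.
Local Notation agrees := (@agree n).

Definition subset_weight (J : {set 'I_n}) : R :=
  \prod_(i < n) (if i \in J then rho else 1 - rho).

Lemma subset_weight_card J : subset_weight J = rho ^+ #|J| * (1 - rho) ^+ (n - #|J|).
Proof.
rewrite /subset_weight (bigID (mem J)) /=.
rewrite (eq_bigr (fun _ => rho)); last by move=> i ->.
rewrite [X in _ * X](eq_bigr (fun _ => 1 - rho)); last by move=> i /negbTE ->.
by rewrite !prodr_const card_notin.
Qed.

Lemma prod_agree (J : {set 'I_n}) (x y : cube n) :
  \prod_i (if i \in J then 2 * rho * (x i == y i)%:R else 1 - rho)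
  = 2 ^+ #|J| * subset_weight J * (agrees J x y)%:R.
Proof.
rewrite subset_weight_card (bigID (mem J)) /=.
rewrite [X in _ * X](eq_bigr (fun _ => 1 - rho)); last by move=> i /negbTE ->.
rewrite [X in _ * X]prodr_const card_notin.
case hag : (agrees J x y).
  rewrite (eq_bigr (fun _ => 2 * rho)); last first.
    by move=> i iJ; rewrite iJ; move/forall_inP: hag => /(_ i iJ) ->; rewrite mulr1.
  by rewrite prodr_const exprMn mulr1 mulrA.
move/negbT: hag; rewrite /agree negb_forall_in => /exists_inP [i iJ hi].
by rewrite (bigD1 i) //= iJ (negbTE hi) mulr0 !mul0r mulr0.
Qed.

(* Writing each kernel factor as (1 - rho) + 2 rho [x_i = y_i] and expanding:
   the noise form is the average of the rescaled agreement counts over a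
   rho-random subset of coordinates. *)
Lemma noise_form_expansion :
  \sum_(J : {set 'I_n}) subset_weight J * scaled_pairs X J = noise_form rho X X.
Proof.
transitivity (\sum_(J : {set 'I_n}) \sum_(x in X) \sum_(y in X)
                2 ^+ #|J| * subset_weight J * (agrees J x y)%:R).
  apply: eq_bigr => J _; rewrite /scaled_pairs /agree_pairs mulrA
    (mulrC (subset_weight J)) mulr_sumr.
  by apply: eq_bigr => x _; rewrite mulr_sumr.
rewrite exchange_big /noise_form; apply: eq_bigr => x _.
rewrite exchange_big; apply: eq_bigr => y _.
under eq_bigr do rewrite -prod_agree.
rewrite -prod_sum_subsets; apply: eq_bigr => i _.
by rewrite /noise_kernel; case: (x i == y i) => /=; ring.
Qed.

Lemma noise_form_by_level :
  noise_form rho X X = \sum_(j < n.+1) rho ^+ j * (1 - rho) ^+ (n - j) * level_sum X j.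
Proof.
rewrite -noise_form_expansion sum_by_size; apply: eq_bigr => j _.
rewrite /level_sum mulr_sumr; apply: eq_bigr => J /eqP hJ.
by rewrite subset_weight_card hJ.
Qed.

(* Since the level averages increase, the noise form dominates the level-k
   average times P(Bin(n, rho) >= k). *)
Lemma level_lower_bound k : (k <= n)%N ->
  level_sum X k / 'C(n, k)%:R * \sum_(j < n.+1 | (k <= j)%N) binom_term n rho j
  <= noise_form rho X X.
Proof.
move=> hk; case/andP: rho01 => r0 r1.
rewrite noise_form_by_level mulr_sumr.
apply: (@le_trans _ _ (\sum_(j < n.+1 | (k <= j)%N)
                        rho ^+ j * (1 - rho) ^+ (n - j) * level_sum X j)).
  apply: ler_sum => j hkj.
  have hjn : (j <= n)%N by rewrite -ltnS.
  have hc : 0 < ('C(n, j)%:R : R) by rewrite ltr0n bin_gt0.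
  have ha := level_avg_mono X k j (introT andP (conj hkj hjn)).
  rewrite ler_pdivlMr // in ha.
  have hp : 0 <= rho ^+ j * (1 - rho) ^+ (n - j)
    by rewrite mulr_ge0 ?exprn_ge0 // subr_ge0.
  have -> : level_sum X k / 'C(n, k)%:R * binom_term n rho j
    = rho ^+ j * (1 - rho) ^+ (n - j) * (level_sum X k / 'C(n, k)%:R * 'C(n, j)%:R)
    by rewrite /binom_term -mulr_natr; ring.
  by rewrite ler_wpM2l.
rewrite [leRHS](bigID (fun j : 'I_n.+1 => (k <= j)%N)) /= lerDl.
apply: sumr_ge0 => j _.
by rewrite mulr_ge0 ?level_sum_ge0 // mulr_ge0 ?exprn_ge0 // subr_ge0.
Qed.

End NoiseExpansion.

Section TransitionProbability.
Variables (n k : nat) (X : {set cube n}).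

Lemma level_sum_trans_count : level_sum X k = 2 ^+ k * (trans_count n k X)%:R.
Proof.
rewrite /level_sum (eq_bigr (fun K => 2 ^+ k * agree_pairs X K)); last first.
  by move=> K /eqP hK; rewrite /scaled_pairs hK.
rewrite -mulr_sumr /trans_count natr_sum; congr (_ * _).
under [RHS]eq_bigr do rewrite natr_sum.
rewrite [RHS]exchange_big /=; apply: eq_bigr => K _; apply: eq_bigr => x _.
rewrite -sum1_card natr_sum big_mkcond [RHS]big_mkcond /=; apply: eq_bigr => y _.
by rewrite inE; case: (y \in X); case: (agree _ K x y).
Qed.

Lemma noise_form_Psi (e : R) : 0 < e -> e <= 1 ->
  noise_form (e / 6) X X <= (2 ^+ n * Psi e (#|X|%:R / 2 ^+ n)) ^+ 2.
Proof.
move=> e0 e1.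
have rho01 : 0 <= e / 6 <= 1 by apply/andP; split; lra.
rewrite expr2; apply: (@noise_form_le (e / 6) rho01 (Psi e) (Psi_0 e) (Psi_1 e)).
move=> a0 a1 b0 b1 h0 h1 h2 h3.
have := two_point_inequality e a0 a1 b0 b1 (conj (elimT RltP e0) (elimT RleP e1))
          (elimT RleP h0) (elimT RleP h1) (elimT RleP h2) (elimT RleP h3).
by rewrite !RealsE /= => /RleP.
Qed.

Lemma trans_prob_bound (e : R) : 0 < e -> e <= 1 -> (k <= n)%N -> (0 < #|X|)%N ->
  (trans_count n k X)%:R / (#|X|%:R * 'C(n, k)%:R * 2 ^+ (n - k))
    * (1 - 2 ^+ k * (1 - e / 12) ^+ n)
  <= Psi e (#|X|%:R / 2 ^+ n) ^+ 2 / (#|X|%:R / 2 ^+ n).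
Proof.
move=> e0 e1 hkn hX.
have rho01 : 0 <= e / 6 <= 1 by apply/andP; split; lra.
have hlow := @level_lower_bound n X (e / 6) rho01 k hkn.
have htail := @binom_upper_tail n (e / 6) rho01 k.
have -> : e / 12 = e / 6 / 2 by field.
rewrite level_sum_trans_count in hlow.
have hHC := le_trans hlow (noise_form_Psi e e0 e1).
set T : R := (trans_count n k X)%:R in hlow hHC *.
set c : R := #|X|%:R in hHC *.
set C : R := 'C(n, k)%:R in hlow hHC *.
set P := \sum_(j < n.+1 | (k <= j)%N) binom_term n (e / 6) j in hlow hHC htail *.
set Ps := Psi e (c / 2 ^+ n) in hHC *.
have N_eq : (2 : R) ^+ n = 2 ^+ k * 2 ^+ (n - k) by rewrite -exprD subnKC.
have c_gt0 : 0 < c by rewrite /c ltr0n.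
have C_gt0 : 0 < C by rewrite /C ltr0n bin_gt0.
have K_gt0 : 0 < (2 : R) ^+ k by rewrite exprn_gt0.
have Q_gt0 : 0 < (2 : R) ^+ (n - k) by rewrite exprn_gt0.
have T_ge0 : 0 <= T by rewrite /T ler0n.
apply: (@le_trans _ _ (T / (c * C * 2 ^+ (n - k)) * P)).
  by apply: ler_wpM2l => //; rewrite divr_ge0 // !mulr_ge0 // ltW.
have -> : T / (c * C * 2 ^+ (n - k)) * P = (2 ^+ k * T / C * P) / (c * 2 ^+ n)
  by rewrite N_eq; field; rewrite !lt0r_neq0.
have -> : Ps ^+ 2 / (c / 2 ^+ n) = (2 ^+ n * Ps) ^+ 2 / (c * 2 ^+ n)
  by rewrite N_eq; field; rewrite !lt0r_neq0.
rewrite ler_pM2r; last by rewrite invr_gt0 mulr_gt0 // exprn_gt0.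
exact: hHC.
Qed.

End TransitionProbability.

Lemma card_le_cube n (X : {set cube n}) : (#|X|%:R : R) <= 2 ^+ n.
Proof.
have : (#|X| <= 2 ^ n)%N.
  by apply: (leq_trans (max_card _)); rewrite /cube card_ffun card_bool card_ord.
by rewrite -(ler_nat R) natrX.
Qed.

Local Close Scope ring_scope.
Local Open Scope R_scope.

Lemma prob_TX_bound n k (X : cube_set n) (e : R) : 0 < e <= 1 -> le k n ->
  0 < mu n X ->
  prob_TX n k X * (1 - 2 ^ k * (1 - e / 12) ^ n) <= Psi e (mu n X) ^ 2 / mu n X.
Proof.
move=> [e0 e1] /ssrnat.leP hkn hmu.
have hX : (0 < #|X|)%N.
  move: hmu; rewrite /mu /card_cube_set; case: #|X| => //= h.
  by exfalso; move: h; rewrite /Rdiv Rmult_0_l; apply: Rlt_irrefl.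
rewrite /prob_TX /mu /card_cube_set /nbinom !RealsE /=; apply/RleP.
by apply: trans_prob_bound => //; [exact/RltP | exact/RleP].
Qed.

Lemma mu_le1 n (X : cube_set n) : mu n X <= 1.
Proof.
rewrite /mu /card_cube_set !RealsE /=; apply/RleP.
by rewrite ler_pdivrMr ?exprn_gt0 // mul1r card_le_cube.
Qed.

End Combinatorics.

Lemma exp_mul_one_sub_le1 (th : R) : exp th * (1 - th) <= 1.
Proof.
pose proof (exp_ineq1_le (- th)).
assert (exp th * exp (- th) = 1) by (rewrite <- exp_plus, Rplus_opp_r; apply exp_0).
pose proof (exp_pos th). nra.
Qed.

Lemma exp_neg_inv_lt (th : R) : 0 < th -> exp (- / th) < th.
Proof.
intros Hth.
pose proof (exp_ineq1_le (/ th)).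
assert (exp (/ th) * exp (- / th) = 1) by (rewrite <- exp_plus, Rplus_opp_r; apply exp_0).
assert (/ th * th = 1) by (field; lra).
pose proof (exp_pos (- / th)). pose proof (Rinv_0_lt_compat th Hth). nra.
Qed.

Lemma exp_pow (a : R) (n : nat) : exp a ^ n = exp (INR n * a).
Proof.
induction n as [|n IH]; [simpl; rewrite Rmult_0_l, exp_0; reflexivity|].
rewrite S_INR, <- tech_pow_Rmult, IH, <- exp_plus. f_equal. ring.
Qed.

(* With the choice e = 12 (1+M) k / n of the noise parameter the binomial
   tail is at most exp(-M): 2^k (1 - (1+M)k/n)^n <= e^k e^{-(1+M)k}. *)
Lemma noise_tail_small (M : R) (k n : nat) : 0 < M -> (1 <= k)%nat ->
  12 * (1 + M) * INR k <= INR n ->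
  2 ^ k * (1 - 12 * (1 + M) * INR k / INR n / 12) ^ n <= exp (- M).
Proof.
intros HM Hk Hkn.
assert (HK : 1 <= INR k) by (apply (le_INR 1); exact Hk).
assert (Hx : 0 < INR n) by nra.
set (a := (1 + M) * INR k / INR n).
replace (12 * (1 + M) * INR k / INR n / 12) with a by (unfold a; field; lra).
assert (Ha1 : a <= 1).
{ unfold a; apply Rmult_le_reg_r with (r := INR n); [lra|].
  unfold Rdiv; rewrite Rmult_assoc, Rinv_l by lra; lra. }
assert (Hpow : (1 - a) ^ n <= exp (- (1 + M) * INR k)).
{ replace (- (1 + M) * INR k) with (INR n * - a) by (unfold a; field; lra).
  rewrite <- exp_pow.
  apply pow_incr; split; [lra | pose proof (exp_ineq1_le (- a)); lra]. }
assert (H2 : 2 ^ k <= exp (INR k)).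
{ replace (INR k) with (INR k * 1) by ring. rewrite <- exp_pow.
  apply pow_incr; pose proof (exp_ineq1 1 ltac:(lra)); lra. }
apply Rle_trans with (exp (INR k) * exp (- (1 + M) * INR k)).
{ apply Rmult_le_compat; try apply pow_le; lra. }
rewrite <- exp_plus. apply exp_le_mono. nra.
Qed.

(* Psi_e(mu)^2 / mu = mu exp((2e/(1+e)) (-ln mu)) <= mu exp(2 e (-ln mu))
   for mu in (0,1]. *)
Lemma Psi_sq_div_le (e mu : R) : 0 < e -> 0 < mu <= 1 ->
  Psi e mu ^ 2 / mu <= mu * exp (2 * e * - ln mu).
Proof.
intros He Hmu.
assert (Hl : ln mu <= 0) by (rewrite <- ln_1; apply ln_le_mono; lra).
unfold Psi. rewrite rpow_sq, rpow_pos by lra.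
unfold Rdiv. rewrite <- (exp_ln mu) at 2 3 by lra.
rewrite <- exp_Ropp, <- !exp_plus. apply exp_le_mono.
assert (Hr : 1 - e <= / (1 + e)).
{ apply Rmult_le_reg_r with (r := 1 + e); [lra|]. rewrite Rinv_l by lra. nra. }
nra.
Qed.

(* Logarithms are eventually negligible: B ln n <= n for large n, by
   ln x <= ln (2B) + x/(2B) - 1. *)
Lemma log_eventually_le (B : R) : 0 < B ->
  exists N : nat, forall n : nat, (N <= n)%nat -> B * ln (INR n) <= INR n.
Proof.
intros HB.
destruct (INR_archimed 1 (2 * B * Rabs (ln (2 * B)) + 4 * B) ltac:(lra)) as [N HN].
rewrite Rmult_1_r in HN.
exists (Nat.max N 1). intros n Hn.
assert (HNn : INR N <= INR n) by (apply le_INR; lia).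
assert (Hn1 : 1 <= INR n) by (apply (le_INR 1); lia).
set (x := INR n) in *.
pose proof (ln_le_sub1 (x / (2 * B)) ltac:(apply Rdiv_lt_0_compat; lra)) as Hl.
unfold Rdiv in Hl at 1. rewrite ln_mult, ln_Rinv in Hl by (try apply Rinv_0_lt_compat; lra).
assert (B * ln x <= B * (ln (2 * B) + x / (2 * B) - 1)) by (apply Rmult_le_compat_l; lra).
assert (B * (x / (2 * B)) = x / 2) by (field; lra).
assert (B * ln (2 * B) <= B * Rabs (ln (2 * B)))
  by (apply Rmult_le_compat_l; [lra | apply Rle_abs]).
assert (0 <= B * Rabs (ln (2 * B))) by (apply Rmult_le_pos; [lra | apply Rabs_pos]).
nra.
Qed.

Lemma log_bound_pos (k : nat -> nat) (C : R) (N : nat) :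
  (forall n, (1 <= k n)%nat) -> (forall n, (N <= n)%nat -> INR (k n) <= C * ln (INR n)) ->
  0 < C.
Proof.
intros Hk HC.
set (m := Nat.max N 3).
pose proof (HC m ltac:(unfold m; lia)) as Hm.
pose proof (le_INR 1 (k m) (Hk m)) as Hk1.
assert (H3 : 3 <= INR m) by (replace 3 with (INR 3) by (simpl; ring); apply le_INR; unfold m; lia).
assert (Hl : 0 < ln (INR m)) by (rewrite <- ln_1; apply ln_increasing; lra).
simpl in Hk1. destruct (Rle_dec C 0); [nra | lra].
Qed.

(* For fixed M, th > 0 and n large, the noise parameter
   e = 12 (1+M) k(n) / n is at most 1 and 2 e |h(n)| <= th: this is where
   k = O(log n) and h = o(n / log^2 n) are used. *)
Lemma eventually_params (k : nat -> nat) (h : nat -> R) (M th : R)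
  (hk1 : forall n : nat, (1 <= k n)%nat)
  (hkO : exists (C : R) (N : nat), forall n : nat, (N <= n)%nat ->
           INR (k n) <= C * ln (INR n))
  (ho : forall eps : R, 0 < eps -> exists N : nat, forall n : nat, (N <= n)%nat ->
           Rabs (h n) <= eps * (INR n / (ln (INR n)) ^ 2)) :
  0 < M -> 0 < th ->
  exists n0 : nat, forall n : nat, (n0 <= n)%nat ->
    12 * (1 + M) * INR (k n) <= INR n /\
    2 * (12 * (1 + M) * INR (k n) / INR n) * Rabs (h n) <= th.
Proof.
intros HM Hth.
destruct hkO as [C [N1 HC]].
pose proof (log_bound_pos k C N1 hk1 HC) as HCpos.
set (eps := th / (24 * (1 + M) * C)).
destruct (ho eps ltac:(unfold eps; apply Rdiv_lt_0_compat; nra)) as [N2 Hh].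
destruct (log_eventually_le (12 * (1 + M) * C) ltac:(nra)) as [N3 Hlog].
exists (Nat.max (Nat.max N1 N2) (Nat.max N3 3)). intros n Hn.
pose proof (HC n ltac:(lia)) as HKn. pose proof (Hh n ltac:(lia)) as Hhn.
pose proof (Hlog n ltac:(lia)) as Hlogn.
assert (H3 : 3 <= INR n) by (replace 3 with (INR 3) by (simpl; ring); apply le_INR; lia).
set (K := INR (k n)) in *. set (x := INR n) in *.
assert (Hln : 1 <= ln x).
{ rewrite <- (ln_exp 1). apply ln_le_mono; [apply exp_pos|].
  pose proof exp_le_3. lra. }
assert (HK : 12 * (1 + M) * K <= 12 * (1 + M) * C * ln x)
  by (rewrite (Rmult_assoc _ C); apply Rmult_le_compat_l; nra).
split; [lra|].
assert (HK0 : 0 <= K) by apply pos_INR.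
apply Rle_trans with (2 * (12 * (1 + M) * K / x) * (eps * (x / ln x ^ 2))).
{ apply Rmult_le_compat_l; [|exact Hhn].
  apply Rmult_le_pos; [lra|]; unfold Rdiv.
  apply Rmult_le_pos; [nra | left; apply Rinv_0_lt_compat; lra]. }
replace (2 * (12 * (1 + M) * K / x) * (eps * (x / ln x ^ 2)))
  with (th * (K / (C * ln x)) * / ln x) by (unfold eps; field; repeat split; nra).
assert (HKC : K / (C * ln x) <= 1).
{ apply Rmult_le_reg_r with (r := C * ln x); [nra|].
  unfold Rdiv; rewrite Rmult_assoc, Rinv_l by nra; lra. }
assert (Hinv : / ln x <= 1) by (rewrite <- Rinv_1; apply Rinv_le_contravar; lra).
assert (0 <= K / (C * ln x))
  by (apply Rmult_le_pos; [lra | apply Rlt_le, Rinv_0_lt_compat; nra]).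
assert (0 <= / ln x) by (left; apply Rinv_0_lt_compat; lra).
assert (Hprod : K / (C * ln x) * / ln x <= 1)
  by (rewrite <- (Rmult_1_l 1); apply Rmult_le_compat; lra).
rewrite Rmult_assoc. apply Rle_trans with (th * 1); [apply Rmult_le_compat_l |]; lra.
Qed.

Lemma margin_bound (eta th P mu L E : R) : 0 < eta -> 0 < th < 1 ->
  1 <= (1 + eta) * (1 - th) ^ 2 -> 0 < mu -> 1 - th < L -> E <= exp th ->
  P * L <= mu * E -> P < (1 + eta) * mu.
Proof.
intros Heta0 Hth Heta Hmu HL HE HPL.
pose proof (exp_mul_one_sub_le1 th) as Hexp.
assert (HE1 : E * (1 - th) <= 1)
  by (apply Rle_trans with (exp th * (1 - th)); [apply Rmult_le_compat_r|]; lra).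
assert (HPL' : P * L * (1 - th) <= mu)
  by (apply Rle_trans with (mu * E * (1 - th)); [apply Rmult_le_compat_r | nra]; lra).
assert (HP : P * L < (1 + eta) * mu * L).
{ apply Rmult_lt_reg_r with (r := 1 - th); [lra|].
  apply Rle_lt_trans with ((1 + eta) * (1 - th) * mu * (1 - th)); [nra|].
  replace ((1 + eta) * mu * L * (1 - th)) with ((1 + eta) * (1 - th) * mu * L) by ring.
  apply Rmult_lt_compat_l; [apply Rmult_lt_0_compat; [apply Rmult_lt_0_compat|]|]; lra. }
apply Rmult_lt_reg_r with (r := L); lra.
Qed.

Lemma margin_choice (eta : R) : 0 < eta ->
  exists th : R, 0 < th < 1 /\ 1 <= (1 + eta) * (1 - th) ^ 2.
Proof.
intros heta. exists (eta / (4 * (1 + eta))). split.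
- split; [apply Rdiv_lt_0_compat; lra|].
  apply Rmult_lt_reg_r with (r := 4 * (1 + eta)); [lra|].
  unfold Rdiv; rewrite Rmult_assoc, Rinv_l by lra; lra.
- apply Rmult_le_reg_r with (r := 16 * (1 + eta)); [lra|].
  replace ((1 + eta) * (1 - eta / (4 * (1 + eta))) ^ 2 * (16 * (1 + eta)))
    with ((4 + 3 * eta) ^ 2) by (field; lra). nra.
Qed.

Lemma noise_stability_at (eta th hn : R) (n k : nat) (X : cube_set n) :
  0 < eta -> 0 < th < 1 -> 1 <= (1 + eta) * (1 - th) ^ 2 -> (1 <= k)%nat ->
  12 * (1 + / th) * INR k <= INR n ->
  2 * (12 * (1 + / th) * INR k / INR n) * Rabs hn <= th ->
  mu n X >= exp (- hn) -> prob_TX n k X < (1 + eta) * mu n X.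
Proof.
intros heta Hth Hmargin Hk Hkn Hsmall HX.
assert (HM : 0 < / th) by (apply Rinv_0_lt_compat; lra).
set (e := 12 * (1 + / th) * INR k / INR n) in *.
pose proof (le_INR 1 k Hk) as Hk1. simpl in Hk1.
assert (He : 0 < e <= 1).
{ unfold e; split; [apply Rdiv_lt_0_compat; nra|].
  apply Rmult_le_reg_r with (r := INR n); [nra|].
  unfold Rdiv; rewrite Rmult_assoc, Rinv_l by nra; lra. }
assert (Hmu : 0 < mu n X <= 1)
  by (split; [pose proof (exp_pos (- hn)); lra | apply Combinatorics.mu_le1]).
assert (Hlog : - ln (mu n X) <= Rabs hn).
{ pose proof (ln_le_mono _ _ (exp_pos (- hn)) (Rge_le _ _ HX)) as Hl.
  rewrite ln_exp in Hl. pose proof (Rle_abs hn). lra. }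
pose proof (Combinatorics.prob_TX_bound n k X e He
  ltac:(apply INR_le; nra) (proj1 Hmu)) as Hkey.
pose proof (Psi_sq_div_le e (mu n X) (proj1 He) Hmu) as Hpsi.
pose proof (noise_tail_small (/ th) k n HM Hk Hkn) as Htail. fold e in Htail.
pose proof (exp_neg_inv_lt th (proj1 Hth)) as HexpM.
apply (margin_bound eta th (prob_TX n k X) (mu n X) (1 - 2 ^ k * (1 - e / 12) ^ n)
  (exp (2 * e * - ln (mu n X))) heta Hth Hmargin (proj1 Hmu));
  [lra | apply exp_le_mono; nra | lra].
Qed.

Theorem claimD (k : nat -> nat) (h : nat -> R)
  (hk1 : forall n : nat, (1 <= k n)%nat)
  (hkO : exists (C : R) (N : nat), forall n : nat, (N <= n)%nat ->
           INR (k n) <= C * ln (INR n))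
  (ho : forall eps : R, 0 < eps -> exists N : nat, forall n : nat, (N <= n)%nat ->
           Rabs (h n) <= eps * (INR n / (ln (INR n)) ^ 2)) :
  forall eta : R, 0 < eta ->
  exists n0 : nat, forall n : nat, (n0 <= n)%nat ->
  forall X : cube_set n,
    @mu n X >= exp (- h n) ->
    prob_TX n (k n) X < (1 + eta) * @mu n X.
Proof.
intros eta heta.
destruct (margin_choice eta heta) as [th [Hth Hmargin]].
assert (HM : 0 < / th) by (apply Rinv_0_lt_compat; lra).
destruct (eventually_params k h (/ th) th hk1 hkO ho HM (proj1 Hth)) as [n0 Hn0].
exists n0. intros n Hn X HX.
destruct (Hn0 n Hn) as [Hkn Hsmall].
exact (noise_stability_at eta th (h n) n (k n) X heta Hth Hmargin (hk1 n) Hkn Hsmall HX).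
Qed.
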